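(* Let $\Gamma$ be an uncountable set, $K\subset\mathbb{R}^\Gamma$ compact, and $D_1,D_2$ separable metrizable spaces. If $f:\Gamma\to D_2$ is a determining function and $g:D_1\to D_2$ is a continuous surjection, then there exists a determining function $f':\Gamma\to D_1$.
   Context: A map $f:\Gamma\to D$ into a separable metrizable space $D$ is a determining function (for $K$) if for every $x\in K$, every compact $C\subset D$ and every $\varepsilon>0$, the set $\{\gamma\in f^{-1}(C): |x_\gamma|>\varepsilon\}$ is finite. *)

From HB Require Import structures.
From mathcomp Require Import all_boot all_order all_algebra.
From mathcomp Require Import all_classical all_reals all_analysis.
Set Implicit Arguments. Unset Strict Implicit. Unset Printing Implicit Defensive.
Import Order.TTheory GRing.Theory Num.Theory.
Import numFieldTopology.Exports numFieldNormedType.Exports.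
Local Open Scope classical_set_scope.
Local Open Scope ring_scope.

Definition separable_space (T : topologicalType) : Prop :=
  exists S : set T, countable S /\ dense S.

Definition determining (R : realType) (Gamma : Type)
    (K : set {ptws Gamma -> R}) (D : topologicalType) (f : Gamma -> D) : Prop :=
  forall x : {ptws Gamma -> R}, K x ->
  forall C : set D, compact C ->
  forall eps : R, 0 < eps ->
  finite_set [set gamma | C (f gamma) /\ eps < `|x gamma|].

From HB Require Import structures.
From mathcomp Require Import all_boot all_order all_algebra.
From mathcomp Require Import all_classical all_reals all_analysis.
Import Order.TTheory GRing.Theory Num.Theory.
Import numFieldTopology.Exports numFieldNormedType.Exports.
Local Open Scope classical_set_scope.
Local Open Scope ring_scope.

(* Compose [f] with a section of [g]: a compact set is pulled back to inside
   the [f]-preimage of its image under [g], which is compact. *)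

Lemma determining_of_comp (R : realType) (Gamma : Type)
    (K : set {ptws Gamma -> R}) (D1 D2 : topologicalType)
    (g : D1 -> D2) (f : Gamma -> D1) :
  continuous g -> determining K (g \o f) -> determining K f.
Proof.
move=> g_cont detgf x Kx C cC eps eps_gt0.
have cgC : compact (g @` C).
  by apply: continuous_compact => //; exact: continuous_subspaceT.
apply: sub_finite_set (detgf x Kx _ cgC eps eps_gt0).
by move=> gam /= [Cfgam eps_lt]; split => //; exists (f gam).
Qed.

Theorem lemma2p4 (R : realType) (Gamma : Type) (K : set {ptws Gamma -> R})
    (D1 D2 : metricType R) :
  ~ countable [set: Gamma] ->
  compact K ->
  separable_space D1 -> separable_space D2 ->
  forall (f : Gamma -> D2) (g : D1 -> D2),
    determining K f ->
    continuous g ->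
    (forall y : D2, exists x : D1, g x = y) ->
  exists f' : Gamma -> D1, determining K f'.
Proof.
move=> _ _ _ _ f g detf g_cont g_surj.
have [s gsK] := boolp.choice g_surj.
exists (s \o f); apply: determining_of_comp g_cont _.
by have -> : g \o (s \o f) = f by apply: boolp.funext => gam /=; rewrite gsK.
Qed.
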